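(* Let $d\ge1$ and let $P$ be a probability distribution on $\{0,1\}^d$ with $P(\nu)>0$ for all $\nu\in\{0,1\}^d$. Fix $\omega\in\{0,1\}^d$. The map $q\mapsto x=(x_1,\ldots,x_d)$ with $x_i:=\left(\frac{q_i}{1-q_i}\right)^{1-2\omega_i}$ is a bijection from $(0,1)^d$ onto $(0,\infty)^d$, and in terms of $x$, \[ f_\omega(q)=\prod_{i=1}^d(1+x_i). \] Moreover, for $q\in(0,1)^d$: $q\in\mathcal{Q}_\omega$ if and only if for every $\nu\in\{0,1\}^d$, \[ \prod_{i:\,\nu_i\ne\omega_i}x_i\le\frac{P(\nu)}{P(\omega)}, \] where the empty product (when $\nu=\omega$) equals $1$.
   Context: For $\omega\in\{0,1\}^d$ and $q\in[0,1]^d$, $f_\omega(q):=\prod_{i=1}^d q_i^{-\omega_i}(1-q_i)^{\omega_i-1}\in\mathbb{R}\cup\{+\infty\}$ (with $0^0=1$, $1/0=+\infty$), and $\mathcal{Q}_\omega:=\{q\in[0,1]^d\mid \forall\nu\in\{0,1\}^d:\ P(\omega)f_\omega(q)\le P(\nu)f_\nu(q)\}$. *)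

From HB Require Import structures.
From mathcomp Require Import all_boot all_order all_algebra.
From mathcomp Require Import boolp classical_sets functions reals constructive_ereal.
Set Implicit Arguments. Unset Strict Implicit. Unset Printing Implicit Defensive.
Import Order.TTheory GRing.Theory Num.Theory.
Local Open Scope ring_scope.
Local Open Scope classical_set_scope.

Section Defs.
Variables (R : realType) (d : nat).

(* Points of {0,1}^d: finite functions 'I_d -> bool (true = 1). *)
Definition cube := {ffun 'I_d -> bool}.

Definition einv (r : R) : \bar R := if r == 0 then +oo%E else (r^-1)%:E.

(* f_omega(q) = prod_i q_i^{-omega_i} (1-q_i)^{omega_i - 1}, with 0^0 = 1, 1/0 = +oo:
   the i-th factor is 1/q_i if omega_i = 1 and 1/(1-q_i) if omega_i = 0. *)
Definition f_omega (w : cube) (q : 'I_d -> R) : \bar R :=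
  (\prod_(i < d) (if w i then einv (q i) else einv (1 - q i)))%E.

Definition closed_cube : set ('I_d -> R) :=
  [set q | forall i, 0 <= q i <= 1].
Definition open_cube : set ('I_d -> R) :=
  [set q | forall i, 0 < q i < 1].
Definition pos_orthant : set ('I_d -> R) :=
  [set x | forall i, 0 < x i].

Definition Q_omega (P : cube -> R) (w : cube) : set ('I_d -> R) :=
  [set q | closed_cube q /\
     forall v : cube, ((P w)%:E * f_omega w q <= (P v)%:E * f_omega v q)%E].

Definition xmap (w : cube) (q : 'I_d -> R) : 'I_d -> R :=
  fun i => (q i / (1 - q i)) ^ (1 - 2 * (w i)%:Z).

End Defs.

From HB Require Import structures.
From mathcomp Require Import all_boot all_order all_algebra.
From mathcomp Require Import boolp classical_sets functions reals constructive_ereal.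
From mathcomp Require Import ring lra.
Import Order.TTheory GRing.Theory Num.Theory.
Local Open Scope ring_scope.
Local Open Scope classical_set_scope.

(* On the open cube every factor of f_v is finite, namely 1/q_i or 1/(1-q_i),
   and the factors for v and w agree except at the coordinates where v_i <> w_i,
   where they differ by the factor x_i.  Hence f_w = f_v * prod_(v_i <> w_i) x_i,
   so that P(w) f_w <= P(v) f_v is exactly the bound on that product. *)

Lemma ler_pM_ratio (R : numFieldType) (a b g x : R) : 0 < a -> 0 < g ->
  (a * (g * x) <= b * g) = (x <= b / a).
Proof.
move=> a_gt0 g_gt0.
by rewrite ler_pdivlMr // mulrCA [b * g]mulrC ler_pM2l // mulrC.
Qed.

Section XMap.
Variables (R : realType) (d : nat) (w : cube d).
Implicit Types (q x : 'I_d -> R) (v : cube d).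

Lemma open_cube_gt0 {q} : open_cube q -> forall i, 0 < q i.
Proof. by move=> qo i; have /andP[] := qo i. Qed.

Lemma open_cube_subr_gt0 {q} : open_cube q -> forall i, 0 < 1 - q i.
Proof. by move=> qo i; have /andP[_] := qo i; rewrite subr_gt0. Qed.

Lemma open_cube_neq0 {q} : open_cube q -> forall i, q i != 0.
Proof. by move=> qo i; rewrite gt_eqF // open_cube_gt0. Qed.

Lemma open_cube_subr_neq0 {q} : open_cube q -> forall i, 1 - q i != 0.
Proof. by move=> qo i; rewrite gt_eqF // open_cube_subr_gt0. Qed.

Lemma xmapE q i :
  xmap w q i = if w i then (1 - q i) / q i else q i / (1 - q i).
Proof. by rewrite /xmap; case: (w i); rewrite ?exprN1 ?invf_div ?expr1z. Qed.

Lemma xmap_gt0 q i : open_cube q -> 0 < xmap w q i.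
Proof.
move=> qo; have q_gt0 := open_cube_gt0 qo i.
have q'_gt0 := open_cube_subr_gt0 qo i.
by rewrite xmapE; case: (w i); apply: divr_gt0.
Qed.

Definition xmap_inv x : 'I_d -> R :=
  fun i => if w i then (1 + x i)^-1 else x i / (1 + x i).

Lemma xmap_inv_open x : pos_orthant x -> open_cube (xmap_inv x).
Proof.
move=> xp i; have x_gt0 := xp i; have x1_gt0 : 0 < 1 + x i by lra.
rewrite /xmap_inv; case: (w i); apply/andP; split.
- by rewrite invr_gt0.
- by rewrite invf_lt1 //; lra.
- exact: divr_gt0.
- by rewrite ltr_pdivrMr // mul1r; lra.
Qed.

Lemma xmapK q : open_cube q -> xmap_inv (xmap w q) = q.
Proof.
move=> qo; apply/funext => i; rewrite /xmap_inv xmapE.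
have q_neq0 := open_cube_neq0 qo i; have q'_neq0 := open_cube_subr_neq0 qo i.
by case: (w i); field; rewrite ?subrK ?subrKC ?oner_neq0 ?q_neq0 ?q'_neq0.
Qed.

Lemma xmap_invK x : pos_orthant x -> xmap w (xmap_inv x) = x.
Proof.
move=> xp; apply/funext => i; rewrite xmapE /xmap_inv.
have x_neq0 : x i != 0 by rewrite gt_eqF // xp.
have x1_neq0 : 1 + x i != 0 by rewrite gt_eqF //; have := xp i; lra.
by case: (w i); field; rewrite ?addrK ?oner_neq0 ?x_neq0 ?x1_neq0.
Qed.

Lemma xmap_bij : set_bij (@open_cube R d) (@pos_orthant R d) (xmap w).
Proof.
split.
- by move=> q qo i; apply: xmap_gt0.
- by apply: (can_in_inj (g := xmap_inv)) => q /set_mem /xmapK.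
- by move=> x xp; exists (xmap_inv x); [apply: xmap_inv_open | apply: xmap_invK].
Qed.

Definition f_factor q (b : bool) i : R := if b then (q i)^-1 else (1 - q i)^-1.

Lemma f_factor_gt0 q b i : open_cube q -> 0 < f_factor q b i.
Proof.
move=> qo; rewrite /f_factor; case: b; rewrite invr_gt0.
- exact: open_cube_gt0.
- exact: open_cube_subr_gt0.
Qed.

Lemma f_omega_open v q : open_cube q ->
  f_omega v q = (\prod_(i < d) f_factor q (v i) i)%:E.
Proof.
move=> qo; rewrite /f_omega -prodEFin; apply: eq_bigr => i _.
rewrite /einv /f_factor; case: (v i).
- by rewrite (negbTE (open_cube_neq0 qo i)).
- by rewrite (negbTE (open_cube_subr_neq0 qo i)).
Qed.

Lemma f_factor_xmap q i : open_cube q -> f_factor q (w i) i = 1 + xmap w q i.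
Proof.
move=> qo; rewrite xmapE /f_factor.
have q_neq0 := open_cube_neq0 qo i; have q'_neq0 := open_cube_subr_neq0 qo i.
by case: (w i); field.
Qed.

Lemma f_factor_flip q b i : open_cube q -> b != w i ->
  f_factor q b i * xmap w q i = f_factor q (w i) i.
Proof.
move=> qo; rewrite xmapE /f_factor.
have q_neq0 := open_cube_neq0 qo i; have q'_neq0 := open_cube_subr_neq0 qo i.
by case: b; case: (w i) => //= _; field; rewrite q_neq0 q'_neq0.
Qed.

Lemma prod_f_factor_flip v q : open_cube q ->
  (\prod_(i < d) f_factor q (v i) i) * \prod_(i < d | v i != w i) xmap w q i
  = \prod_(i < d) f_factor q (w i) i.
Proof.
move=> qo; rewrite [X in _ * X]big_mkcond -big_split /=.
apply: eq_bigr => i _; have [-> | vNw] := eqVneq (v i) (w i).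
- by rewrite mulr1.
- exact: f_factor_flip.
Qed.

Lemma f_omega_xmap q : open_cube q ->
  f_omega w q = (\prod_(i < d) (1 + xmap w q i))%:E.
Proof.
move=> qo; rewrite f_omega_open //; congr (_%:E).
by apply: eq_bigr => i _; apply: f_factor_xmap.
Qed.

Lemma Q_omega_open (P : cube d -> R) q : (forall v, 0 < P v) -> open_cube q ->
  Q_omega P w q <->
  forall v, \prod_(i < d | v i != w i) xmap w q i <= P v / P w.
Proof.
move=> P_gt0 qo.
have f_omega_le v : ((P w)%:E * f_omega w q <= (P v)%:E * f_omega v q)%E =
    (\prod_(i < d | v i != w i) xmap w q i <= P v / P w).
  rewrite !f_omega_open // -!EFinM lee_fin -(prod_f_factor_flip v q qo).
  by rewrite ler_pM_ratio // prodr_gt0 // => i _; apply: f_factor_gt0.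
split=> [[_ Qw] v | Xle]; first by rewrite -f_omega_le; apply: Qw.
split=> [i | v]; last by rewrite f_omega_le; apply: Xle.
by have /andP[/ltW-> /ltW->] := qo i.
Qed.

End XMap.

Theorem lemma3 (R : realType) (d : nat) (P : cube d -> R) (w : cube d) :
  (0 < d)%N ->
  (forall v, 0 < P v) ->
  \sum_(v : cube d) P v = 1 ->
  [/\ set_bij (@open_cube R d) (@pos_orthant R d) (xmap w),
      (forall q : 'I_d -> R, open_cube q ->
         f_omega w q = (\prod_(i < d) (1 + xmap w q i))%:E) &
      (forall q : 'I_d -> R, open_cube q ->
         (Q_omega P w q <->
          forall v : cube d,
            \prod_(i < d | v i != w i) xmap w q i <= P v / P w))].
Proof.
move=> _ P_gt0 _; split.
- exact: xmap_bij.
- exact: f_omega_xmap.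
- by move=> q; apply: Q_omega_open.
Qed.
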